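(* Every finite-dimensional Yetter-Drinfeld module over $H=B(n,w,\gamma)$ contains a standard element.
   Context: $\Bbbk$ is an algebraically closed field of characteristic $0$; $n,w$ positive integers, $\gamma$ a primitive $n$-th root of unity. $H=B(n,w,\gamma)$ is the Hopf algebra generated by $x^{\pm1},g,y$ with relations $xx^{-1}=x^{-1}x=1$, $xg=gx$, $xy=yx$, $yg=\gamma gy$, $y^n=1-x^w=1-g^n$, with $\Delta(x)=x\otimes x$, $\Delta(g)=g\otimes g$, $\Delta(y)=y\otimes g+1\otimes y$, $\varepsilon(x)=\varepsilon(g)=1$, $\varepsilon(y)=0$, $S(x)=x^{-1}$, $S(g)=g^{-1}$, $S(y)=-yg^{-1}$; its group of group-likes is $G(H)=\{g^jx^k\}$. A (left-left) Yetter-Drinfeld module is a left $H$-module, left $H$-comodule $(V,\cdot,\delta)$ with $\delta(h\cdot v)=h_{(1)}v_{(-1)}S(h_{(3)})\otimes h_{(2)}\cdot v_{(0)}$. A nonzero $v\in V$ is a standard element (of type $(\alpha,\beta,h)$) if there are $h\in G(H)$ and $\alpha,\beta\in\Bbbk^*$ with $x\cdot v=\alpha v$, $g\cdot v=\beta v$, $\delta(v)=h\otimes v$. *)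

(* Concrete model of H = B(n,w,gamma) on its PBW basis
   { y^i g^j x^k : 0 <= i < n, 0 <= j < n, k in Z }, and Yetter-Drinfeld
   modules over H on K^d (column vectors, h.v = rho(h) *m v). *)
From HB Require Import structures.
From mathcomp Require Import all_boot all_order all_algebra.
Set Implicit Arguments.
Unset Strict Implicit.
Unset Printing Implicit Defensive.
Import GRing.Theory.
Local Open Scope ring_scope.

(* index (i, j, k) stands for the element y^i g^j x^k of H *)
Definition bidx := (nat * nat * int)%type.

Section BHopf.
Variable K : fieldType.
Variables (n w : nat) (gam : K).

Definition canon (e : bidx) : bool := (e.1.1 < n)%N && (e.1.2 < n)%N.

Definition Hf := seq (K * bidx).

(* normal form of y^i g^j x^k, using g^n = x^w and y^n = 1 - x^w
   (y^(qn+r) = y^r (1 - x^w)^q = sum_t (-1)^t C(q,t) y^r x^(wt)) *)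
Definition normb (i j : nat) (k : int) : Hf :=
  let q := (i %/ n)%N in let r := (i %% n)%N in
  [seq ((-1) ^+ t * ('C(q, t))%:R,
        (r, (j %% n)%N, k + (w * (j %/ n))%N%:Z + (w * t)%N%:Z)) | t <- iota 0 q.+1].

(* product of basis elements: y^i g^j x^k . y^i' g^j' x^k'
   = gam^-(j i') y^(i+i') g^(j+j') x^(k+k')   (since g y = gam^-1 y g) *)
Definition mulb (a b : bidx) : Hf :=
  let: (i, j, k) := a in let: (i', j', k') := b in
  [seq (gam ^- (j * i') * p.1, p.2) | p <- normb (i + i') (j + j') (k + k')].

Definition mulH (u v : Hf) : Hf :=
  flatten [seq [seq (p.1 * q.1 * r.1, r.2) | r <- mulb p.2 q.2] | p <- u, q <- v].

Definition oneH : Hf := normb 0 0 0.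
Definition powH (u : Hf) (m : nat) : Hf := iter m (mulH u) oneH.
Definition hx : Hf := normb 0 0 1.
Definition hxi : Hf := normb 0 0 (-1).
Definition hg : Hf := normb 0 1 0.
Definition hgi : Hf := normb 0 n.-1 (- (w%:Z)).  (* g^-1 = g^(n-1) x^-w *)
Definition hy : Hf := normb 1 0 0.
Definition xpowH (k : int) : Hf :=
  match k with Posz m => powH hx m | Negz m => powH hxi m.+1 end.
Definition eb (e : bidx) : Hf := normb e.1.1 e.1.2 e.2.

Definition coefH (e : bidx) (u : Hf) : K :=
  \sum_(p <- u) (if p.2 == e then p.1 else 0).

Definition epsb (e : bidx) : K := (e.1.1 == 0)%N%:R.

Definition Sy : Hf := [seq (- p.1, p.2) | p <- mulH hy hgi].
Definition antib (e : bidx) : Hf :=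
  let: (i, j, k) := e in mulH (xpowH (- k)) (mulH (powH hgi j) (powH Sy i)).

Definition H2 := seq (K * bidx * bidx).
Definition tensH (u v : Hf) : H2 := [seq (p.1 * q.1, p.2, q.2) | p <- u, q <- v].
Definition mulH2 (U V : H2) : H2 :=
  flatten [seq tensH [seq (p.1.1 * q.1.1 * r.1, r.2) | r <- mulb p.1.2 q.1.2]
                     (mulb p.2 q.2) | p <- U, q <- V].
Definition oneH2 : H2 := tensH oneH oneH.
Definition powH2 (U : H2) (m : nat) : H2 := iter m (mulH2 U) oneH2.
Definition Dy : H2 := tensH hy hg ++ tensH oneH hy.
Definition Dg : H2 := tensH hg hg.
Definition Dx : H2 := tensH hx hx.
Definition Dxi : H2 := tensH hxi hxi.
Definition DxpowH (k : int) : H2 :=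
  match k with Posz m => powH2 Dx m | Negz m => powH2 Dxi m.+1 end.
(* coproduct of a basis element (Delta is an algebra map) *)
Definition Delb (e : bidx) : H2 :=
  let: (i, j, k) := e in mulH2 (powH2 Dy i) (mulH2 (powH2 Dg j) (DxpowH k)).
Definition coef2 (a b : bidx) (U : H2) : K :=
  \sum_(p <- U) (if (p.1.2 == a) && (p.2 == b) then p.1.1 else 0).
(* (Delta (x) id) Delta of a basis element: entries (c, h1, h2, h3) *)
Definition H3 := seq (K * bidx * bidx * bidx).
Definition Del2b (e : bidx) : H3 :=
  flatten [seq [seq (p.1.1 * q.1.1, q.1.2, q.2, p.2) | q <- Delb p.1.2] | p <- Delb e].

(* A d-dimensional Yetter-Drinfeld module: action matrices X (x), Xi (x^-1),
   G (g), Y (y); coaction delta(v) = sum_(e <- s) e (x) (D e *m v). *)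
Variable d : nat.
Variables (X Xi G Y : 'M[K]_d) (D : bidx -> 'M[K]_d) (s : seq bidx).

Definition Xpow (k : int) : 'M[K]_d :=
  match k with Posz m => X ^+ m | Negz m => Xi ^+ m.+1 end.
Definition rhob (e : bidx) : 'M[K]_d :=
  let: (i, j, k) := e in Y ^+ i * G ^+ j * Xpow k.

Definition is_Hmodule : Prop :=
  [/\ X * Xi = 1, Xi * X = 1, X * G = G * X, X * Y = Y * X &
      [/\ Y * G = gam *: (G * Y), Y ^+ n = 1 - X ^+ w & Y ^+ n = 1 - G ^+ n]].

Definition is_Hcomodule : Prop :=
  [/\ all canon s, uniq s, (forall e, e \notin s -> D e = 0),
      \sum_(e <- s) epsb e *: D e = 1
    & forall a b : bidx, D b * D a = \sum_(e <- s) coef2 a b (Delb e) *: D e].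

(* delta(h.v) = h1 v_(-1) S(h3) (x) h2 v_(0), for h running over the basis *)
Definition is_YDcompat : Prop :=
  forall h : bidx, canon h -> forall e : bidx,
    D e * rhob h =
    \sum_(t <- Del2b h) \sum_(c <- s)
       (t.1.1.1 * coefH e (mulH (mulH (eb t.1.1.2) (eb c)) (antib t.2)))
         *: (rhob t.1.2 * D c).

Definition is_YDmodule : Prop := [/\ is_Hmodule, is_Hcomodule & is_YDcompat].

Definition standard_elt (v : 'cV[K]_d) : Prop :=
  exists (j : nat) (k : int) (al be : K),
    [/\ v != 0, (j < n)%N, al != 0 & be != 0] /\
    [/\ X *m v = al *: v, G *m v = be *: v
      & forall e : bidx, D e *m v = (e == (0%N, j, k))%:R *: v].

End BHopf.

(* The y-degree grades the coalgebra H, so a product of n coaction matrices D_b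
   of positive y-degree lies in the span of the D_e of y-degree >= n, which is
   zero.  Hence some nonzero v is killed by all of them, and the counit then
   yields a group-like h = g^j x^k with u = D_h v nonzero and delta(u) = h (x) u.
   By the Yetter-Drinfeld condition at the group-likes x and g, both preserve
   this space of vectors of coaction h (g h g^-1 = h because h has y-degree 0),
   so over the algebraically closed field the commuting operators x and g have a
   common eigenvector there.  Its eigenvalues are nonzero because x is
   invertible and g^n = x^w. *)

From HB Require Import structures.
From mathcomp Require Import all_boot all_order all_algebra zify.
Set Implicit Arguments. Unset Strict Implicit. Unset Printing Implicit Defensive.
Import GRing.Theory.
Local Open Scope ring_scope.

Arguments Delb : simpl never.

Section StableEigenvector.
Variables (K : closedFieldType) (d : nat) (A : 'M[K]_d.+1) (P : 'cV[K]_d.+1 -> Prop).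
Hypothesis PB : forall u v, P u -> P v -> P (u - v).
Hypothesis PZ : forall (a : K) u, P u -> P (a *: u).
Hypothesis PA : forall u, P u -> P (A *m u).

Lemma stable_eigenvector v : P v -> v != 0 ->
  exists l u, [/\ P u, u != 0 & A *m u = l *: u].
Proof.
have P_prod rs u : P u -> P ((\prod_(z <- rs) (A - z%:M)) *m u).
  move=> Pu; elim: rs => [|z rs IHrs]; first by rewrite big_nil mul1mx.
  rewrite big_cons -mulmxE -mulmxA mulmxBl mul_scalar_mx.
  by apply: PB; [apply: PA | apply: PZ].
suff eigen_of_prod rs : P v -> v != 0 -> (\prod_(z <- rs) (A - z%:M)) *m v = 0 ->
    exists l u, [/\ P u, u != 0 & A *m u = l *: u].
  have [rs char_rs] := closed_field_poly_normal (char_poly A).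
  rewrite (monicP (char_poly_monic A)) scale1r in char_rs.
  have prod_eq0 : \prod_(z <- rs) (A - z%:M) = 0.
    rewrite -(Cayley_Hamilton A) char_rs rmorph_prod; apply: eq_bigr => z _.
    by rewrite rmorphB /= horner_mx_X horner_mx_C.
  by move=> Pv v_neq0; apply: (eigen_of_prod rs) => //; rewrite prod_eq0 mul0mx.
elim: rs v => [|z rs IHrs] v Pv v_neq0.
  by rewrite big_nil mul1mx => /eqP; rewrite (negPf v_neq0).
rewrite big_cons -mulmxE -mulmxA.
have [u0|u_neq0] := eqVneq ((\prod_(z <- rs) (A - z%:M)) *m v) 0.
  by move=> _; exact: IHrs v Pv v_neq0 u0.
move=> Azu; exists z, ((\prod_(z <- rs) (A - z%:M)) *m v); split => //; first exact: P_prod.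
by apply/eqP; rewrite -subr_eq0 -mul_scalar_mx -mulmxBl Azu.
Qed.

End StableEigenvector.

Lemma nilpotent_family_common_kernel (R : fieldType) d (I : eqType)
    (A : I -> 'M[R]_d.+1) (r : seq I) N :
  (forall t, all (mem r) t -> size t = N -> \prod_(i <- t) A i = 0) ->
  exists2 v : 'cV[R]_d.+1, v != 0 & forall i, i \in r -> A i *m v = 0.
Proof.
move=> prod_eq0; pose v0 : 'cV[R]_d.+1 := const_mx 1.
suff kernel_from k t : all (mem r) t -> (size t + k = N)%N ->
    (\prod_(i <- t) A i) *m v0 != 0 ->
    exists2 v : 'cV[R]_d.+1, v != 0 & forall i, i \in r -> A i *m v = 0.
  apply: (kernel_from N [::]) => //; rewrite big_nil mul1mx.
  by apply/eqP => /matrixP/(_ 0 0)/eqP; rewrite !mxE oner_eq0.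
elim: k t => [|k IHk] t rt size_t; first by rewrite prod_eq0 ?mul0mx ?eqxx // -size_t addn0.
set u := (\prod_(j <- t) A j) *m v0.
have [/hasP[i ri]|/hasPn kills] := boolP (has (fun i => A i *m u != 0) r).
  rewrite mulmxA mulmxE => Aiu_neq0 _; apply: (IHk (i :: t)); rewrite /= ?ri ?big_cons //.
  by rewrite addSnnS.
move=> u_neq0; exists u => // i ri.
by apply/eqP; rewrite -[_ == 0]negbK kills.
Qed.

Lemma stable_common_eigenvector (K : closedFieldType) d (A B : 'M[K]_d.+1)
    (P : 'cV[K]_d.+1 -> Prop) v :
  (forall u v, P u -> P v -> P (u - v)) -> (forall (a : K) u, P u -> P (a *: u)) ->
  (forall u, P u -> P (A *m u)) -> (forall u, P u -> P (B *m u)) -> A * B = B * A ->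
  P v -> v != 0 ->
  exists a b u, [/\ P u, u != 0, A *m u = a *: u & B *m u = b *: u].
Proof.
move=> PB PZ PA PBm AB Pv v_neq0.
have [a [u [Pu u_neq0 Au]]] := stable_eigenvector PB PZ PA Pv v_neq0.
pose Pa u := P u /\ A *m u = a *: u.
have PaB x y : Pa x -> Pa y -> Pa (x - y).
  by case=> Px Ax [Py Ay]; split; [exact: PB | rewrite mulmxBr Ax Ay scalerBr].
have PaZ c x : Pa x -> Pa (c *: x).
  by case=> Px Ax; split; [exact: PZ | rewrite -scalemxAr Ax !scalerA mulrC].
have PaBm x : Pa x -> Pa (B *m x).
  by case=> Px Ax; split; [exact: PBm | rewrite mulmxA mulmxE AB -mulmxE -mulmxA Ax scalemxAr].
have [b [u' [[Pu' Au'] u'_neq0 Bu']]] := stable_eigenvector PaB PaZ PaBm (conj Pu Au) u_neq0.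
by exists a, b, u'.
Qed.

Lemma mulmx_expr_eigen (R : comNzRingType) d (A : 'M[R]_d.+1) (v : 'cV[R]_d.+1) a m :
  A *m v = a *: v -> A ^+ m *m v = a ^+ m *: v.
Proof.
move=> Av; elim: m => [|m IHm]; first by rewrite !expr0 mul1mx scale1r.
by rewrite exprS -mulmxE -mulmxA IHm -scalemxAr Av scalerA -exprSr.
Qed.

Lemma eigenvalue_neq0 (R : comNzRingType) d (A A' : 'M[R]_d.+1) (v : 'cV[R]_d.+1) a :
  A' * A = 1 -> v != 0 -> A *m v = a *: v -> a != 0.
Proof.
move=> A'A v_neq0 Av; apply: contraNneq v_neq0 => a0.
have -> : v = (A' * A) *m v by rewrite A'A mul1mx.
by rewrite -mulmxE -mulmxA Av a0 scale0r mulmx0.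
Qed.

Section Model.
Variables (K : fieldType) (n w : nat) (gam : K).
Hypothesis n_gt0 : (0 < n)%N.

Lemma normb_small i j k : (i < n)%N ->
  normb K n w i j k = [:: (1, (i, (j %% n)%N, k + (w * (j %/ n))%N%:Z))].
Proof.
by move=> lt_in; rewrite /normb divn_small // modn_small //= muln0 addr0 mulr1.
Qed.

Lemma normb_canon i j k : (i < n)%N -> (j < n)%N -> normb K n w i j k = [:: (1, (i, j, k))].
Proof.
by move=> lt_in lt_jn; rewrite normb_small // modn_small // divn_small // muln0 addr0.
Qed.

Lemma ebE e : canon n e -> eb K n w e = [:: (1, e)].
Proof. by case: e => [[i j] k] /andP[/= lt_in lt_jn]; rewrite /eb normb_canon. Qed.

Lemma mulb_small {i j k i' j' k'} : (i + i' < n)%N ->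
  mulb n w gam (i, j, k) (i', j', k') =
  [:: (gam ^- (j * i'), (i + i', ((j + j') %% n)%N, k + k' + (w * ((j + j') %/ n))%N%:Z))].
Proof. by move=> lt_n; rewrite /mulb normb_small //= mulr1. Qed.

Lemma mulb_canon {i j k i' j' k'} : (i + i' < n)%N -> (j + j' < n)%N ->
  mulb n w gam (i, j, k) (i', j', k') =
  [:: (gam ^- (j * i'), ((i + i')%N, (j + j')%N, k + k'))].
Proof. by move=> lt_i lt_j; rewrite /mulb normb_canon //= mulr1. Qed.

Lemma mulH_singleton c a c' a' ca a2 :
  mulb n w gam a a' = [:: (ca, a2)] ->
  mulH n w gam [:: (c, a)] [:: (c', a')] = [:: (c * c' * ca, a2)].
Proof. by move=> mul_aa'; rewrite /mulH /= mul_aa'. Qed.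

Lemma mulH2_singleton c a b c' a' b' ca a2 cb b2 :
  mulb n w gam a a' = [:: (ca, a2)] -> mulb n w gam b b' = [:: (cb, b2)] ->
  mulH2 n w gam [:: (c, a, b)] [:: (c', a', b')] = [:: (c * c' * ca * cb, a2, b2)].
Proof. by move=> mul_aa' mul_bb'; rewrite /mulH2 /= mul_aa' mul_bb'. Qed.

Lemma coefH_singleton e (c : K) f : coefH e [:: (c, f)] = if f == e then c else 0.
Proof. by rewrite /coefH big_cons big_nil addr0. Qed.

Lemma oneH2E : oneH2 K n w = [:: (1, (0%N, 0%N, 0), (0%N, 0%N, 0))].
Proof. by rewrite /oneH2 /oneH normb_canon // /tensH /= mulr1. Qed.

Lemma powH2_Dg j : (j < n)%N ->
  powH2 n w gam (Dg K n w) j = [:: (1, (0%N, j, 0), (0%N, j, 0))].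
Proof.
elim: j => [|j IHj] lt_jn /=; first exact: oneH2E.
rewrite IHj 1?ltnW // /Dg /hg normb_canon ?(leq_ltn_trans _ lt_jn) // /tensH /=.
rewrite (mulH2_singleton _ _ (mulb_canon _ _) (mulb_canon _ _)) //=.
by rewrite add0n add1n addr0 muln0 expr0 !divr1 !mulr1.
Qed.

Lemma powH2_Dx m : powH2 n w gam (Dx K n w) m = [:: (1, (0%N, 0%N, m%:Z), (0%N, 0%N, m%:Z))].
Proof.
elim: m => [|m IHm] /=; first exact: oneH2E.
rewrite IHm /Dx /hx normb_canon // /tensH /=.
rewrite (mulH2_singleton _ _ (mulb_canon _ _) (mulb_canon _ _)) //=.
by rewrite muln0 expr0 !divr1 !mulr1 addn0 -PoszD add1n.
Qed.

Lemma powH2_Dxi m :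
  powH2 n w gam (Dxi K n w) m = [:: (1, (0%N, 0%N, - m%:Z), (0%N, 0%N, - m%:Z))].
Proof.
elim: m => [|m IHm] /=; first by rewrite oneH2E oppr0.
rewrite IHm /Dxi /hxi normb_canon // /tensH /=.
rewrite (mulH2_singleton _ _ (mulb_canon _ _) (mulb_canon _ _)) //=.
by rewrite muln0 expr0 !divr1 !mulr1 addn0 -opprD -PoszD add1n.
Qed.

Lemma DxpowHE k : DxpowH n w gam k = [:: (1, (0%N, 0%N, k), (0%N, 0%N, k))].
Proof. by case: k => m; [exact: powH2_Dx | rewrite /DxpowH powH2_Dxi NegzE]. Qed.

Lemma Delb_grouplike j k : (j < n)%N ->
  Delb n w gam (0%N, j, k) = [:: (1, (0%N, j, k), (0%N, j, k))].
Proof.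
move=> lt_jn; rewrite /Delb /= powH2_Dg // DxpowHE oneH2E.
rewrite (mulH2_singleton _ _ (mulb_canon _ _) (mulb_canon _ _)) ?addn0 //.
rewrite (mulH2_singleton _ _ (mulb_canon _ _) (mulb_canon _ _)) ?addn0 //=.
by rewrite muln0 expr0 !divr1 !mulr1 add0n !add0r.
Qed.

Lemma coef2_Delb_grouplike a b j k : (j < n)%N ->
  coef2 a b (Delb n w gam (0%N, j, k)) = (((0%N, j, k) == a) && ((0%N, j, k) == b))%:R.
Proof.
by move=> lt_jn; rewrite Delb_grouplike // /coef2 big_cons big_nil addr0; case: (_ && _).
Qed.

Lemma Del2b_grouplike j k : (j < n)%N ->
  Del2b n w gam (0%N, j, k) = [:: (1, (0%N, j, k), (0%N, j, k), (0%N, j, k))].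
Proof. by move=> lt_jn; rewrite /Del2b Delb_grouplike //= Delb_grouplike //= mulr1. Qed.

Definition adjb h e : Hf K :=
  mulH n w gam (mulH n w gam (eb K n w h) (eb K n w e)) (antib n w gam h).

Lemma antib_x : antib n w gam (0%N, 0%N, 1) = [:: (1, (0%N, 0%N, -1))].
Proof.
rewrite /antib /= /hxi /oneH !normb_canon //.
rewrite !(mulH_singleton _ _ (mulb_canon _ _)) //=.
by rewrite !addn0 muln0 expr0 !divr1 !mulr1 !addr0.
Qed.

Lemma adjb_x e : canon n e -> adjb (0%N, 0%N, 1) e = [:: (1, e)].
Proof.
case: e => [[i j] k] /[dup] canon_e /andP[lt_in lt_jn].
rewrite /adjb antib_x (ebE canon_e) ebE ?/canon ?n_gt0 //.
rewrite !(mulH_singleton _ _ (mulb_canon _ _)) ?addn0 //=.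
by rewrite mul0n muln0 expr0 !divr1 !mulr1 !add0n addrAC subrr add0r.
Qed.

Lemma antib_g : antib n w gam (0%N, 1%N, 0) = [:: (1, (0%N, n.-1, - w%:Z))].
Proof.
rewrite /antib /= /hgi /oneH !normb_canon ?ltn_predL //.
rewrite !(mulH_singleton _ _ (mulb_canon _ _)) ?addn0 ?add0n ?ltn_predL //=.
by rewrite !muln0 expr0 !divr1 !mulr1 !addr0 add0r.
Qed.

Lemma adjb_g e : (1 < n)%N -> canon n e ->
  adjb (0%N, 1%N, 0) e = [:: (gam ^- e.1.1, e)].
Proof.
move=> n_gt1; case: e => [[i j] k] /[dup] canon_e /andP[lt_in lt_jn].
rewrite /adjb antib_g (ebE canon_e) ebE ?/canon ?n_gt0 //.
rewrite (mulH_singleton _ _ (mulb_small _)) //.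
rewrite (mulH_singleton _ _ (mulb_small _)) ?addn0 //=.
(* g^-1 is stored as g^(n-1) x^-w; exactly one of the two products wraps past
   g^n = x^w. *)
have div_sum1 : ((1 + j) %/ n + ((1 + j) %% n + n.-1) %/ n = 1)%N.
  by move: lt_jn => /= lt_jn; nia.
rewrite mul1n muln0 expr0 !divr1 !mulr1 mul1r add0r.
by congr [:: (_, (_, _, _))]; nia.
Qed.

Lemma normb_ydeg i j k p : p \in normb K n w i j k -> p.2.1.1 = (i %% n)%N.
Proof. by case/mapP=> t _ ->. Qed.

Lemma mulb_ydeg a b p : p \in mulb n w gam a b -> p.2.1.1 = ((a.1.1 + b.1.1) %% n)%N.
Proof.
by case: a b => [[i j] k] [[i' j'] k'] /mapP[q /normb_ydeg ydeg_q ->].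
Qed.

Definition ydeg2_homog (U : H2 K) m := forall p, p \in U -> (p.1.2.1.1 + p.2.1.1 = m)%N.

Lemma ydeg2_homog_tens (u v : Hf K) a b :
  (forall p, p \in u -> p.2.1.1 = a) -> (forall p, p \in v -> p.2.1.1 = b) ->
  ydeg2_homog (tensH u v) (a + b).
Proof. by move=> ydeg_u ydeg_v _ /allpairsP[[p q] [/ydeg_u <- /ydeg_v <- ->]]. Qed.

Lemma ydeg2_homog_cat U V m : ydeg2_homog U m -> ydeg2_homog V m -> ydeg2_homog (U ++ V) m.
Proof. by move=> homU homV p; rewrite mem_cat => /orP[/homU|/homV]. Qed.

Lemma ydeg2_homog_mul U V m1 m2 : ydeg2_homog U m1 -> ydeg2_homog V m2 ->
  (m1 + m2 < n)%N -> ydeg2_homog (mulH2 n w gam U V) (m1 + m2).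
Proof.
move=> homU homV lt_m p /flattenP[_ /allpairsP[[u v] [/= /homU Uu /homV Vv ->]]].
have mod_sum a b c d : (a + c = m1)%N -> (b + d = m2)%N ->
    ((a + b) %% n + (c + d) %% n = m1 + m2)%N.
  by move=> Em1 Em2; rewrite !modn_small; lia.
rewrite -(mod_sum _ _ _ _ Uu Vv).
apply: ydeg2_homog_tens p => [_ /mapP[r /mulb_ydeg <- ->] //|]; exact: mulb_ydeg.
Qed.

Lemma ydeg2_homog_oneH2 : ydeg2_homog (oneH2 K n w) 0.
Proof. by rewrite oneH2E => _ /[1!inE] /eqP ->. Qed.

Lemma ydeg2_homog_pow U m k : ydeg2_homog U m -> (m * k < n)%N ->
  ydeg2_homog (powH2 n w gam U k) (m * k).
Proof.
move=> homU; elim: k => [|k IHk] lt_mk /=; first by rewrite muln0; exact: ydeg2_homog_oneH2.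
rewrite mulnS in lt_mk *; apply: (ydeg2_homog_mul homU (IHk _) lt_mk); lia.
Qed.

Lemma ydeg2_homog_Dy : (1 < n)%N -> ydeg2_homog (Dy K n w) 1.
Proof.
move=> n_gt1; apply: ydeg2_homog_cat; [rewrite -[1%N]addn0 | rewrite -[1%N]add0n];
  by apply: ydeg2_homog_tens => p /normb_ydeg ->; rewrite ?mod0n ?modn_small.
Qed.

Lemma ydeg2_homog_Delb e : (e.1.1 < n)%N -> ydeg2_homog (Delb n w gam e) e.1.1.
Proof.
case: e => [[i j] k] /= lt_in; rewrite /Delb -[X in ydeg2_homog _ X]addn0.
apply: ydeg2_homog_mul; rewrite ?addn0 //; last first.
  rewrite -[0%N]addn0; apply: ydeg2_homog_mul => //.
    rewrite -(mul0n j); apply: ydeg2_homog_pow => //.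
    by rewrite -[0%N]addn0; apply: ydeg2_homog_tens => p /normb_ydeg ->; rewrite mod0n.
  by rewrite DxpowHE => _ /[1!inE] /eqP ->.
case: i lt_in => [_|i lt_in]; first exact: ydeg2_homog_oneH2.
rewrite -[X in ydeg2_homog _ X]mul1n; apply: ydeg2_homog_pow; rewrite ?mul1n //.
by apply: ydeg2_homog_Dy; lia.
Qed.

Lemma coef2_Delb_ydeg a b e : (e.1.1 < n)%N -> coef2 a b (Delb n w gam e) != 0 ->
  (a.1.1 + b.1.1 = e.1.1)%N.
Proof.
move=> lt_en; apply: contraNeq => ydeg_ne; rewrite /coef2 big1_seq // => p /= Dp.
case: ifP => // /andP[/eqP pa /eqP pb]; case/eqP: ydeg_ne.
by rewrite -pa -pb; exact: ydeg2_homog_Delb.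
Qed.

End Model.

Section YDModule.
Variables (K : fieldType) (n w : nat) (gam : K).
Hypothesis n_gt0 : (0 < n)%N.
Variables (d : nat) (X Xi G Y : 'M[K]_d.+1) (D : bidx -> 'M[K]_d.+1) (s : seq bidx).
Hypothesis s_canon : all (canon n) s.
Hypothesis s_uniq : uniq s.
Hypothesis D_out : forall e, e \notin s -> D e = 0.
Hypothesis D_counit : \sum_(e <- s) epsb K e *: D e = 1.
Hypothesis D_comul :
  forall a b : bidx, D b * D a = \sum_(e <- s) coef2 a b (Delb n w gam e) *: D e.
Hypothesis YD : is_YDcompat n w gam X Xi G Y D s.

Lemma canon_mem e : e \in s -> canon n e.
Proof. exact: (allP s_canon). Qed.

Lemma big_ifeq_seq (V : lmodType K) (a : bidx -> K) (F : bidx -> V) e :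
  (e \notin s -> F e = 0) -> \sum_(c <- s) (if c == e then a c else 0) *: F c = a e *: F e.
Proof.
move=> F_out; have [se|se] := boolP (e \in s).
  by rewrite (bigD1_seq e) //= eqxx big1 ?addr0 // => c /negbTE ->; rewrite scale0r.
rewrite F_out // scaler0 big1_seq // => c /= sc; case: eqP => [ce|_]; last exact: scale0r.
by rewrite -ce sc in se.
Qed.

Lemma YD_grouplike j k e : (j < n)%N ->
  D e * rhob X Xi G Y (0%N, j, k) = \sum_(c <- s)
    coefH e (adjb n w gam (0%N, j, k) c)
      *: (rhob X Xi G Y (0%N, j, k) * D c).
Proof.
move=> lt_jn; rewrite YD ?/canon ?n_gt0 // Del2b_grouplike // big_cons big_nil addr0 /=.
by apply: eq_bigr => c _; rewrite mul1r.
Qed.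

Lemma D_commute_X e : D e * X = X * D e.
Proof.
have := YD_grouplike 1 e n_gt0; rewrite [rhob _ _ _ _ _]/rhob /= !expr0 !mul1r expr1 => ->.
under eq_big_seq => c sc do rewrite adjb_x ?canon_mem // coefH_singleton.
by rewrite big_ifeq_seq ?scale1r // => /D_out ->; rewrite mulr0.
Qed.

Lemma D_commute_G e : (1 < n)%N -> D e * G = gam ^- e.1.1 *: (G * D e).
Proof.
move=> n_gt1; have := YD_grouplike 0 e n_gt1.
rewrite [rhob _ _ _ _ _]/rhob /= !expr0 mul1r expr1 mulr1 => ->.
under eq_big_seq => c sc do rewrite adjb_g ?canon_mem // coefH_singleton.
by rewrite big_ifeq_seq // => /D_out ->; rewrite mulr0.
Qed.

Definition span_ydeg_ge m (M : 'M[K]_d.+1) := exists f : bidx -> K,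
  (forall c, c \in s -> (c.1.1 < m)%N -> f c = 0) /\ M = \sum_(c <- s) f c *: D c.

Lemma span_ydeg_ge0_1 : span_ydeg_ge 0 1.
Proof. by exists (epsb K); rewrite D_counit. Qed.

Lemma span_ydeg_ge_n M : span_ydeg_ge n M -> M = 0.
Proof.
case=> f [f0 ->]; rewrite big1_seq // => c /= sc.
by rewrite f0 ?scale0r //; case/andP: (canon_mem sc).
Qed.

Lemma span_ydeg_geS b m M : (0 < b.1.1)%N -> span_ydeg_ge m M ->
  span_ydeg_ge m.+1 (D b * M).
Proof.
move=> b_pos [f [f0 ->]].
exists (fun e => \sum_(c <- s) f c * coef2 c b (Delb n w gam e)); split.
  move=> e se lt_em; rewrite big1_seq // => c /= sc.
  have [->|fc_neq0] := eqVneq (f c) 0; first by rewrite mul0r.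
  have [->|coef_neq0] := eqVneq (coef2 c b (Delb n w gam e)) 0; first by rewrite mulr0.
  have := coef2_Delb_ydeg n_gt0 (proj1 (andP (canon_mem se))) coef_neq0.
  case: (ltnP c.1.1 m) => [/(f0 _ sc) fc0|le_mc]; first by rewrite fc0 eqxx in fc_neq0.
  by move=> ydeg_sum; rewrite ltnS -ydeg_sum leqNgt -addn1 leq_add in lt_em.
rewrite mulr_sumr (eq_bigr (fun c => \sum_(e <- s) (f c * coef2 c b (Delb n w gam e)) *: D e)).
  by rewrite exchange_big; apply: eq_bigr => e _; rewrite scaler_suml.
by move=> c _; rewrite -scalerAr D_comul scaler_sumr; apply: eq_bigr => e _; rewrite scalerA.
Qed.

Lemma prod_ydeg_pos_eq0 t : all (fun b => 0 < b.1.1)%N t -> size t = n ->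
  \prod_(b <- t) D b = 0.
Proof.
move=> t_pos size_t; apply: span_ydeg_ge_n; rewrite -size_t {size_t}.
elim: t t_pos => [_|b t IHt /andP[b_pos t_pos]].
  by rewrite big_nil; exact: span_ydeg_ge0_1.
by rewrite big_cons; apply: span_ydeg_geS => //; exact: IHt.
Qed.

Lemma ydeg_pos_common_kernel :
  exists2 v : 'cV[K]_d.+1, v != 0 & forall b, b \in s -> (0 < b.1.1)%N -> D b *m v = 0.
Proof.
have prod_eq0 t : all (mem [seq b <- s | 0 < b.1.1]%N) t -> size t = n ->
    \prod_(b <- t) D b = 0.
  move/allP=> t_pos; apply: prod_ydeg_pos_eq0; apply/allP => b /t_pos.
  by rewrite inE mem_filter => /andP[].
have [v v_neq0 Dv0] := nilpotent_family_common_kernel prod_eq0.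
by exists v => // b sb b_pos; apply: Dv0; rewrite mem_filter b_pos.
Qed.

Definition coacts_by h (u : 'cV[K]_d.+1) := forall e, D e *m u = (e == h)%:R *: u.

Lemma counit_ydeg0_witness (v : 'cV[K]_d.+1) : v != 0 ->
  exists2 h, h \in s & (h.1.1 == 0)%N && (D h *m v != 0).
Proof.
move=> v_neq0; apply/hasP; apply: contraNT v_neq0 => /hasPn Dv_eq0.
have -> : v = (\sum_(e <- s) epsb K e *: D e) *m v by rewrite D_counit mul1mx.
rewrite mulmx_suml big1_seq // => c /= sc.
rewrite -scalemxAl /epsb; case: eqP => c0; last by rewrite scale0r.
by move: (Dv_eq0 c sc); rewrite c0 eqxx negbK => /eqP ->; rewrite scaler0.
Qed.

Lemma coacts_by_ydeg0 h v : (forall b, b \in s -> (0 < b.1.1)%N -> D b *m v = 0) ->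
  h \in s -> h.1.1 = 0%N -> coacts_by h (D h *m v).
Proof.
move=> Dv0 sh h0 e; rewrite mulmxA mulmxE D_comul mulmx_suml.
rewrite (eq_big_seq (fun c => (if c == h then (e == h)%:R else 0) *: (D c *m v))).
  by rewrite big_ifeq_seq // => /negP[].
move=> [[i j] k] sc; rewrite -scalemxAl; case: (posnP i) => [i0|i_pos]; last first.
  by rewrite Dv0 ?scaler0.
rewrite i0 coef2_Delb_grouplike //; last by case/andP: (canon_mem sc).
by have [<-|_] := eqVneq (0%N, j, k) h; rewrite /= ?scale0r // eq_sym.
Qed.

Lemma exists_coinvariant :
  exists h u, [/\ h \in s, h.1.1 = 0%N, u != 0 & coacts_by h u].
Proof.
have [v v_neq0 Dv0] := ydeg_pos_common_kernel.
have [h sh /andP[/eqP h0 Dhv_neq0]] := counit_ydeg0_witness v_neq0.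
by exists h, (D h *m v); split; last exact: coacts_by_ydeg0.
Qed.

Lemma coacts_byB h u v : coacts_by h u -> coacts_by h v -> coacts_by h (u - v).
Proof. by move=> Du Dv e; rewrite mulmxBr Du Dv scalerBr. Qed.

Lemma coacts_byZ h a u : coacts_by h u -> coacts_by h (a *: u).
Proof. by move=> Du e; rewrite -scalemxAr Du !scalerA mulrC. Qed.

Lemma coacts_byX h u : coacts_by h u -> coacts_by h (X *m u).
Proof. by move=> Du e; rewrite mulmxA mulmxE D_commute_X -mulmxE -mulmxA Du scalemxAr. Qed.

Lemma coacts_byG h : G ^+ n = X ^+ w -> h.1.1 = 0%N ->
  forall u, coacts_by h u -> coacts_by h (G *m u).
Proof.
move=> GnXw h0 u Du; have [n1|n_gt1] : n = 1%N \/ (1 < n)%N by lia.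
  (* for n = 1, g = x^w is not a basis element of its own *)
  have -> : G = X ^+ w by rewrite -GnXw n1 expr1.
  elim: (w) u Du => [|m IHm] u Du; first by rewrite expr0 mul1mx.
  by rewrite exprS -mulmxE -mulmxA; apply/coacts_byX/IHm.
move=> e; rewrite mulmxA mulmxE D_commute_G // -scalemxAl -mulmxE -mulmxA Du.
by case: eqP => [->|_]; rewrite ?h0 ?expr0 ?invr1 ?scale1r // !scale0r mulmx0 scaler0.
Qed.

End YDModule.

Theorem lemma3p3 (K : closedFieldType) (charK : [pchar K] =i pred0)
  (n w : nat) (gam : K) (hn : (0 < n)%N) (hw : (0 < w)%N)
  (hgam : n.-primitive_root gam)
  (d : nat) (hd : (0 < d)%N) (X Xi G Y : 'M[K]_d) (D : bidx -> 'M[K]_d)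
  (s : seq bidx) :
  is_YDmodule n w gam X Xi G Y D s ->
  exists v : 'cV[K]_d, standard_elt n X G D v.
Proof.
case: d hd X Xi G Y D => // d _ X Xi G Y D.
case=> [[_ XiX XG _ [_ YnX YnG]] [s_canon s_uniq D_out D_counit D_comul] YD].
have GnXw : G ^+ n = X ^+ w by move: YnG; rewrite YnX => /addrI/oppr_inj ->.
have [h [u [sh h0 u_neq0 Du]]] := exists_coinvariant hn s_canon s_uniq D_counit D_comul.
have [al [be [v [Dv v_neq0 Xv Gv]]]] := stable_common_eigenvector
  (coacts_byB (h := h)) (coacts_byZ (h := h)) (coacts_byX hn s_canon s_uniq D_out YD (h := h))
  (coacts_byG hn s_canon s_uniq D_out YD GnXw h0) XG Du u_neq0.
have al_neq0 := eigenvalue_neq0 XiX v_neq0 Xv.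
have be_neq0 : be != 0.
  apply: contraNneq al_neq0 => be0; have := mulmx_expr_eigen w Xv.
  rewrite -GnXw (mulmx_expr_eigen n Gv) be0 expr0n (gtn_eqF hn) scale0r => /esym/eqP.
  by rewrite scaler_eq0 (negPf v_neq0) orbF expf_eq0 => /andP[].
exists v, h.1.2, h.2, al, be; split; split => //; first by case/andP: (allP s_canon _ sh).
by move=> e; rewrite Dv; case: h h0 {sh Du Dv} => [[i j] k] /= ->.
Qed.
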